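(* In the setting described in the context, assume $f$ is strongly convex with respect to the norm $\|\cdot\|_{LP^{-1}}$ with convexity parameter $\mu>0$. Choose an initial point $x_0$, target accuracy $0<\epsilon<f(x_0)-f^*$, confidence $0<\rho<1$, and $$k\geq\frac1\mu\log\frac{f(x_0)-f^*}{\epsilon\rho}.$$ If $x_k$ is the random point generated by RCDS$(p,x_0)$ applied to $f$, then $\mathbf{P}(f(x_k)-f^*\leq\epsilon)\geq1-\rho$.
   Context: Let $U\in\mathbf{R}^{N\times N}$ be a column permutation of the $N\times N$ identity matrix, partitioned as $U=[U_1,\dots,U_n]$ with $U_i\in\mathbf{R}^{N\times N_i}$, $\sum_iN_i=N$; for $x\in\mathbf{R}^N$ write $x^{(i)}=U_i^Tx$. Each $\mathbf{R}^{N_i}$ carries an arbitrary norm $\|\cdot\|_{(i)}$ with dual norm $\|s\|_{(i)}^*=\max_{\|t\|_{(i)}=1}\langle s,t\rangle$. Let $f:\mathbf{R}^N\to\mathbf{R}$ be convex and differentiable with $\|\nabla_if(x+U_it)-\nabla_if(x)\|_{(i)}^*\leq L_i\|t\|_{(i)}$ for all $x,t,i$, where $L_i>0$ and $\nabla_if(x)=U_i^T\nabla f(x)$; $f$ attains its minimum $f^*$. Let $p$ be a probability vector with all $p_i>0$, $L=\mathrm{Diag}(L_i)$, $P=\mathrm{Diag}(p_i)$, and $\|x\|_{LP^{-1}}=(\sum_i\frac{L_i}{p_i}\|x^{(i)}\|_{(i)}^2)^{1/2}$. Strong convexity w.r.t. $\|\cdot\|_{LP^{-1}}$ with parameter $\mu$: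 $f(x)\geq f(y)+\langle\nabla f(y),x-y\rangle+\frac\mu2\|x-y\|_{LP^{-1}}^2$ for all $x,y$. For $s\in\mathbf{R}^{N_i}$, $s^\#$ denotes an optimal solution of $\min_{t}\{-\langle s,t\rangle+\frac12\|t\|_{(i)}^2\}$. Algorithm RCDS$(p,x_0)$: for $k=0,1,2,\dots$, choose $i$ with probability $p_i$ (independently) and set $x_{k+1}=x_k-\frac1{L_i}U_i(\nabla_if(x_k))^\#$. *)

From mathcomp Require Import all_boot all_order all_algebra.
From mathcomp Require Import all_classical all_reals all_analysis.
Set Implicit Arguments. Unset Strict Implicit. Unset Printing Implicit Defensive.
Import Order.TTheory GRing.Theory Num.Theory.
Local Open Scope ring_scope.
Local Open Scope classical_set_scope.

Section RCDS.
Variable R : realType.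

Definition inprod m (s t : 'cV[R]_m) : R := (s^T *m t) 0 0.

Definition is_norm m (nrm : 'cV[R]_m -> R) : Prop :=
  (forall t, 0 <= nrm t) /\
  (forall t, nrm t = 0 -> t = 0) /\
  (forall (a : R) t, nrm (a *: t) = `|a| * nrm t) /\
  (forall s t, nrm (s + t) <= nrm s + nrm t).

Definition dual_norm m (nrm : 'cV[R]_m -> R) (s : 'cV[R]_m) : R :=
  sup [set inprod s t | t in [set t | nrm t = 1]].

Definition grad N (f : 'cV[R]_N -> R) (x : 'cV[R]_N) : 'cV[R]_N :=
  \col_j derive f x (delta_mx j 0 : 'cV[R]_N).

Definition convex_fun N (f : 'cV[R]_N -> R) : Prop :=
  forall (x y : 'cV[R]_N) (t : R), 0 <= t <= 1 ->
    f (t *: x + (1 - t) *: y) <= t * f x + (1 - t) * f y.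

Variables (n : nat) (Ns : 'I_n -> nat).
Local Notation N := (\sum_(i < n) Ns i)%N.

Definition Ublk (U : 'M[R]_N) (i : 'I_n) : 'M[R]_(N, Ns i) := submxrow U i.

Definition blk (U : 'M[R]_N) (i : 'I_n) (x : 'cV[R]_N) : 'cV[R]_(Ns i) :=
  (Ublk U i)^T *m x.

Definition grad_blk (U : 'M[R]_N) (f : 'cV[R]_N -> R) (i : 'I_n) (x : 'cV[R]_N)
  : 'cV[R]_(Ns i) := (Ublk U i)^T *m grad f x.

Definition norm_LPinv (U : 'M[R]_N) (nrm : forall i, 'cV[R]_(Ns i) -> R)
  (L p : 'I_n -> R) (x : 'cV[R]_N) : R :=
  Num.sqrt (\sum_(i < n) L i / p i * (nrm i (blk U i x)) ^+ 2).

Definition is_sharp m (nrm : 'cV[R]_m -> R) (s ts : 'cV[R]_m) : Prop :=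
  forall t, - inprod s ts + 2^-1 * (nrm ts) ^+ 2 <= - inprod s t + 2^-1 * (nrm t) ^+ 2.

(* one step of RCDS with chosen block i; sharp is the selection s |-> s^# *)
Definition rcds_step (U : 'M[R]_N) (f : 'cV[R]_N -> R)
  (sharp : forall i, 'cV[R]_(Ns i) -> 'cV[R]_(Ns i)) (L : 'I_n -> R)
  (x : 'cV[R]_N) (i : 'I_n) : 'cV[R]_N :=
  x - (L i)^-1 *: (Ublk U i *m sharp i (grad_blk U f i x)).

(* x_k as a function of the chosen indices i_0, ..., i_{k-1} *)
Definition rcds_iter (U : 'M[R]_N) (f : 'cV[R]_N -> R)
  (sharp : forall i, 'cV[R]_(Ns i) -> 'cV[R]_(Ns i)) (L : 'I_n -> R)
  (x0 : 'cV[R]_N) (s : seq 'I_n) : 'cV[R]_N :=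
  foldl (rcds_step U f sharp L) x0 s.

(* P(f(x_k) - f^* <= eps) when the indices are i.i.d. with law p *)
Definition rcds_prob (U : 'M[R]_N) (f : 'cV[R]_N -> R)
  (sharp : forall i, 'cV[R]_(Ns i) -> 'cV[R]_(Ns i)) (L p : 'I_n -> R)
  (x0 : 'cV[R]_N) (k : nat) (fstar eps : R) : R :=
  \sum_(s : k.-tuple 'I_n | f (rcds_iter U f sharp L x0 s) - fstar <= eps)
     \prod_(i <- s) p i.

End RCDS.

(* A block step decreases [f] by at least [-(L_i)^-1] times the
   optimal value of the model [-<g,t> + ||t||^2/2] at [g = grad_i f(x)] (block
   descent lemma).  Minimising the strong-convexity lower bound
   [f^* >= f(x) + <grad f(x), x^* - x> + mu/2 ||x^* - x||^2_{LP^-1}] block by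
   block bounds the [p]-average of these decreases; with [D(x) = f(x) - f^*]
   this gives [E[D(x_{k+1}) | x_k] <= (1 - mu) D(x_k)].  Iterating,
   [E[D(x_k)] <= (1 - mu)^k D(x_0) <= exp(-mu k) D(x_0) <= eps rho], and
   Markov's inequality concludes.  The dual norm, a supremum, is finite because
   every norm on [R^m] dominates a multiple of the max norm. *)

From mathcomp Require Import all_boot all_order all_algebra.
From mathcomp Require Import all_classical all_reals all_analysis.
From mathcomp Require Import ring lra.
From mathcomp Require Import fingroup perm.
Import Order.TTheory GRing.Theory Num.Theory numFieldNormedType.Exports.
Local Open Scope ring_scope.
Local Open Scope classical_set_scope.
Set Implicit Arguments. Unset Strict Implicit. Unset Printing Implicit Defensive.

Lemma mx_normr_entry (R : realDomainType) m n (A : 'M[R]_(m, n)) i j :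
  `|A i j| <= `|A|.
Proof.
rewrite [leRHS]/Num.Def.normr /= mx_normrE; apply/bigmax_geP; right.
by exists (i, j).
Qed.

Section Norms.
Variables (R : realType) (m : nat) (nrm : 'cV[R]_m -> R).
Hypothesis nrmP : is_norm nrm.

Lemma is_norm_ge0 t : 0 <= nrm t.
Proof. by case: nrmP. Qed.

Lemma is_normZ a t : nrm (a *: t) = `|a| * nrm t.
Proof. by case: nrmP => _ [_ []]. Qed.

Lemma is_norm0 : nrm 0 = 0.
Proof. by rewrite -(scale0r 0) is_normZ normr0 mul0r. Qed.

Lemma is_norm_triangle s t : nrm (s + t) <= nrm s + nrm t.
Proof. by case: nrmP => _ [_ [_]]. Qed.

Lemma is_norm_gt0 t : t != 0 -> 0 < nrm t.
Proof.
case: nrmP => _ [nrm_eq0 _] t0; rewrite lt_def is_norm_ge0 andbT.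
by apply: contraNN t0 => /eqP/nrm_eq0 ->.
Qed.

Lemma is_norm_sum (I : Type) (r : seq I) (P : pred I) (F : I -> 'cV[R]_m) :
  nrm (\sum_(i <- r | P i) F i) <= \sum_(i <- r | P i) nrm (F i).
Proof.
elim/big_rec2: _ => [|i y1 y2 _ IH]; first by rewrite is_norm0.
by apply: le_trans (is_norm_triangle _ _) _; rewrite lerD2l.
Qed.

Let nrmT (r : 'rV[R]_m) := nrm r^T.

Lemma is_norm_le_mx_norm :
  exists2 K, 0 <= K & forall r : 'rV[R]_m, nrmT r <= K * `|r|.
Proof.
exists (\sum_(j < m) nrm (delta_mx j 0)).
  by apply: sumr_ge0 => j _; exact: is_norm_ge0.
move=> r; rewrite /nrmT {1}[r^T]matrix_sum_delta mulr_suml.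
apply: le_trans (is_norm_sum _ _ _) _; apply: ler_sum => j _.
by rewrite big_ord1 is_normZ mulrC ler_wpM2l ?is_norm_ge0 // mxE mx_normr_entry.
Qed.

Lemma continuous_is_norm_rV : continuous nrmT.
Proof.
have [K K0 nrmK] := is_norm_le_mx_norm.
have nrmTD r s : nrmT (r + s) <= nrmT r + nrmT s.
  by rewrite /nrmT linearD is_norm_triangle.
have lip x y : `|nrmT x - nrmT y| <= K * `|x - y|.
  rewrite ler_norml; apply/andP; split.
    have := nrmTD (y - x) x; rewrite subrK.
    have := nrmK (y - x); rewrite -normrN opprB; lra.
  by have := nrmTD (x - y) y; rewrite subrK; have := nrmK (x - y); lra.
move=> x; have nbhs_x : Filter (nbhs x) by apply: nbhs_filter.
apply/cvgrPdist_lt => e e0; near=> y.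
apply: le_lt_trans (lip x y) _.
have : `|x - y| < e / (K + 1).
  near: y; apply: (@cvgr_dist_lt _ _ _ _ nbhs_x id x) => //.
  by rewrite divr_gt0 // ltr_pwDr.
rewrite ltr_pdivlMr ?ltr_pwDr // => h; apply: le_lt_trans h.
by rewrite mulrC ler_wpM2l // lerDl.
Unshelve. all: by end_near. Qed.

Lemma is_norm_ge_coord :
  exists2 c, 0 < c & forall (v : 'cV[R]_m) j, c * `|v j 0| <= nrm v.
Proof.
pose S := [set r : 'rV[R]_m | `|r| = 1].
have normalize r : r != 0 -> S (`|r|^-1 *: r).
  move=> r0; rewrite /S /= normrZ normrV ?unitfE ?normr_eq0 //.
  by rewrite normr_id mulVf // normr_eq0.
have [S0|S0] := pselect (S !=set0); last first.
  exists 1 => // v j; suff -> : v = 0 by rewrite mxE normr0 mulr0 is_norm0.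
  apply: trmx_inj; rewrite trmx0; apply/eqP; apply: contra_notT S0 => vT0.
  by exists (`|v^T|^-1 *: v^T); exact: normalize.
have cS : compact S.
  apply: bounded_closed_compact.
    by exists 1; split=> [|M M1 r /= ->]; [exact: real1 | exact: ltW].
  rewrite (_ : S = (@Num.Def.normr _ _) @^-1` [set 1]) //.
  by apply: preimage_closed; [move=> r _; exact: norm_continuous | exact: closed_eq].
have [c /set_mem Sc cmin] :=
  compact_EVT_min S0 cS (continuous_subspaceT continuous_is_norm_rV).
have c0 : c != 0.
  by apply/eqP => c0; move: Sc; rewrite /S /= c0 normr0 => /eqP; rewrite eq_sym oner_eq0.
exists (nrmT c) => [|v j]; first by rewrite is_norm_gt0 // -trmx0 (inj_eq trmx_inj).
have [->|v0] := eqVneq v 0; first by rewrite mxE normr0 mulr0 is_norm0.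
have vT0 : v^T != 0 by rewrite -trmx0 (inj_eq trmx_inj).
have := cmin _ (mem_set (normalize _ vT0)).
rewrite /nrmT linearZ /= trmxK is_normZ normrV ?unitfE ?normr_eq0 // normr_id.
rewrite mulrC ler_pdivlMr ?normr_gt0 // => /(le_trans _); apply.
rewrite ler_wpM2l ?is_norm_ge0 //.
have -> : v j 0 = v^T 0 j by rewrite mxE.
exact: mx_normr_entry.
Qed.
End Norms.

Section InnerProduct.
Variables (R : realType) (m : nat).
Implicit Types s t : 'cV[R]_m.

Lemma inprodE s t : inprod s t = \sum_j s j 0 * t j 0.
Proof. by rewrite /inprod mxE; apply: eq_bigr => j _; rewrite mxE. Qed.

Lemma inprodZr a s t : inprod s (a *: t) = a * inprod s t.
Proof. by rewrite /inprod -scalemxAr mxE. Qed.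

Lemma inprodBl s s' t : inprod (s - s') t = inprod s t - inprod s' t.
Proof. by rewrite !inprodE -sumrB; apply: eq_bigr => j _; rewrite !mxE mulrBl. Qed.

Lemma inprod_mulmx N (g : 'cV[R]_N) (V : 'M[R]_(N, m)) t :
  inprod g (V *m t) = inprod (V^T *m g) t.
Proof. by rewrite /inprod trmx_mul trmxK mulmxA. Qed.

Lemma inprod_le_dual_norm (nrm : 'cV[R]_m -> R) s t : is_norm nrm ->
  inprod s t <= dual_norm nrm s * nrm t.
Proof.
move=> nrmP; have [->|t0] := eqVneq t 0.
  by rewrite -(scale0r 0) inprodZr is_normZ // normr0 !mul0r mulr0.
have nt0 := is_norm_gt0 nrmP t0.
have [u nu tE] : exists2 u, nrm u = 1 & t = nrm t *: u.
  exists ((nrm t)^-1 *: t); last by rewrite scalerA mulfV ?gt_eqF // scale1r.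
  by rewrite is_normZ // ger0_norm ?invr_ge0 ?ltW // mulVf ?gt_eqF.
rewrite tE inprodZr is_normZ // nu mulr1 gtr0_norm // mulrC ler_wpM2r ?(ltW nt0) //.
have [c c0 coord_le] := is_norm_ge_coord nrmP.
apply: sup_upper_bound; last by exists u.
split; first by exists (inprod s u), u.
exists (\sum_j `|s j 0| / c) => _ [v /= nv <-].
rewrite inprodE; apply: ler_sum => j _; apply: le_trans (ler_norm _) _.
by rewrite normrM ler_wpM2l // -[c^-1]mul1r ler_pdivlMr // mulrC -nv coord_le.
Qed.
End InnerProduct.

Section Descent.
Variable R : realType.

Lemma derive_gradE N (f : 'cV[R]_N -> R) y w : differentiable f y ->
  derive f y w = inprod (grad f y) w.
Proof.
move=> df; rewrite deriveE // {1}[w]matrix_sum_delta linear_sum inprodE.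
apply: eq_bigr => i _; rewrite big_ord1 linearZ /= mxE deriveE //.
by rewrite mulrC.
Qed.

Lemma is_derive_line N (f : 'cV[R]_N -> R) x w (s : R) :
  differentiable f (x + s *: w) ->
  is_derive s 1 (fun r => f (x + r *: w)) (derive f (x + s *: w) w).
Proof.
move=> df.
have E : (fun h : R => h^-1 *: (((fun r => f (x + r *: w)) \o shift s) (h *: 1)
            - f (x + s *: w))) =
         (fun h => h^-1 *: ((f \o shift (x + s *: w)) (h *: w) - f (x + s *: w))).
  apply: funext => h /=; congr (_ *: (f _ - _)).
  by rewrite [h%:A]mulr1 scalerDl addrCA addrA.
split; first by rewrite /derivable E; apply: diff_derivable.
by rewrite /derive E.
Qed.

Lemma descent_lemma N m (f : 'cV[R]_N -> R) (nrm : 'cV[R]_m -> R)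
    (V : 'M[R]_(N, m)) (Lc : R) x t :
  is_norm nrm -> (forall y, differentiable f y) ->
  (forall y u, dual_norm nrm (V^T *m grad f (y + V *m u) - V^T *m grad f y)
                 <= Lc * nrm u) ->
  f (x + V *m t) <= f x + inprod (V^T *m grad f x) t + Lc / 2 * nrm t ^+ 2.
Proof.
move=> nrmP df lipV.
(* Mean value theorem for [F] minus the quadratic majorant of its increment. *)
pose c0 := inprod (V^T *m grad f x) t; pose K := Lc * nrm t ^+ 2.
pose F s := f (x + s *: (V *m t)).
pose q : {poly R} := c0 *: 'X + (K / 2) *: 'X^2.
have dG (s : R) : is_derive s (1 : R) (F - horner q : R -> R)
    (derive f (x + s *: (V *m t)) (V *m t) - q^`().[s]).
  by apply: is_deriveB; exact: is_derive_line.
have G_cont : {within `[0, 1], continuous (F - horner q)}.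
  by apply: derivable_within_continuous => s _; case: (dG s).
have [c] := MVT_segment ler01 (fun s _ => dG s) G_cont.
rewrite in_itv /= => /andP[c_ge0 _] G1G0.
have slope_le : derive f (x + c *: (V *m t)) (V *m t) - c0 <= K * c.
  rewrite !derive_gradE // inprod_mulmx -inprodBl scalemxAr.
  apply: le_trans (inprod_le_dual_norm _ _ nrmP) _.
  apply: le_trans (ler_wpM2r (is_norm_ge0 nrmP _) (lipV _ _)) _.
  by rewrite is_normZ // ger0_norm // /K le_eqVlt; apply/orP; left; apply/eqP; ring.
have dq : q^`().[c] = c0 + K * c.
  by rewrite /q derivD !derivZ derivX derivXn !hornerE /=; field.
have GE : (F - horner q) 1 - (F - horner q) 0 = F 1 - q.[1] - (F 0 - q.[0]) by [].
move: G1G0; rewrite GE dq /F /q !hornerE /= scale1r scale0r addr0 subr0 mulr1.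
by rewrite /c0 /K in slope_le *; nra.
Qed.
End Descent.

Definition model_val (R : realType) m (nrm : 'cV[R]_m -> R) (s t : 'cV[R]_m) : R :=
  - inprod s t + 2^-1 * nrm t ^+ 2.

Lemma model_val_sharp_le (R : realType) m (nrm : 'cV[R]_m -> R) s ts d c :
  is_norm nrm -> is_sharp nrm s ts -> 0 < c ->
  model_val nrm s ts / c <= inprod s d + c / 2 * nrm d ^+ 2.
Proof.
move=> nrmP sharpP c_gt0; rewrite ler_pdivrMr //.
apply: le_trans (sharpP (- c *: d)) _.
rewrite inprodZr is_normZ // normrN gtr0_norm //.
by rewrite le_eqVlt; apply/orP; left; apply/eqP; field.
Qed.

Lemma perm_mx_mulmx_tr (R : pzSemiRingType) m (U : 'M[R]_m) :
  is_perm_mx U -> U *m U^T = 1%:M.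
Proof. by case/is_perm_mxP => s ->; rewrite tr_perm_mx -perm_mxM mulgV perm_mx1. Qed.

Section RCDSStep.
Variables (R : realType) (n : nat) (Ns : 'I_n -> nat).
Local Notation N := (\sum_(i < n) Ns i)%N.
Variables (U : 'M[R]_N) (f : 'cV[R]_N -> R) (L p : 'I_n -> R).
(* Keep the block index explicit in [nrm i], [sharp i] and the hypotheses. *)
Unset Implicit Arguments.
Variables (nrm : forall i, 'cV[R]_(Ns i) -> R).
Variables (sharp : forall i, 'cV[R]_(Ns i) -> 'cV[R]_(Ns i)).
Hypotheses (nrmP : forall i, is_norm (nrm i)) (L_gt0 : forall i, 0 < L i).
Hypothesis sharpP : forall i s, is_sharp (nrm i) s (sharp i s).
Hypothesis lipL : forall x i (t : 'cV[R]_(Ns i)),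
  dual_norm (nrm i) (grad_blk U f i (x + Ublk U i *m t) - grad_blk U f i x)
    <= L i * nrm i t.
Set Implicit Arguments.
Hypotheses (U_perm : is_perm_mx U) (df : forall x, differentiable f x).
Hypotheses (p_gt0 : forall i, 0 < p i) (p_sum1 : \sum_i p i = 1).
Variables (mu fstar : R) (xs : 'cV[R]_N).
Hypotheses (mu_gt0 : 0 < mu) (fxs : f xs = fstar).
Hypothesis strong : forall x y, f x >= f y + inprod (grad f y) (x - y)
  + mu / 2 * (norm_LPinv U nrm L p (x - y)) ^+ 2.

Let model (i : 'I_n) (x : 'cV[R]_N) :=
  model_val (nrm i) (grad_blk U f i x) (sharp i (grad_blk U f i x)).

Lemma inprod_blk_sum g d :
  inprod g d = \sum_i inprod ((Ublk U i)^T *m g) (blk U i d).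
Proof.
have -> : inprod g d = ((g^T *m U) *m (U^T *m d)) 0 0.
  by rewrite /inprod mulmxA -(mulmxA _ U) perm_mx_mulmx_tr // mulmx1.
rewrite -[g^T *m U]submxrowK -[U^T *m d]submxcolK mul_mxrow_mxcol summxE.
apply: eq_bigr => i _; rewrite /inprod /blk /Ublk trmx_mul trmxK mul_submxrow.
by rewrite tr_submxrow submxcol_mul.
Qed.

Lemma rcds_step_le x i :
  f (rcds_step U f sharp L x i) <= f x + (L i)^-1 * model i x.
Proof.
have -> : rcds_step U f sharp L x i =
    x + Ublk U i *m (- (L i)^-1 *: sharp i (grad_blk U f i x)).
  by rewrite /rcds_step -scalemxAr scaleNr.
apply: le_trans (descent_lemma _ _ (nrmP i) df (lipL ^~ i)) _.
rewrite inprodZr is_normZ // normrN gtr0_norm ?invr_gt0 //.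
rewrite /model /model_val /grad_blk le_eqVlt; apply/orP; left; apply/eqP.
by field; rewrite gt_eqF.
Qed.

Lemma sum_model_le_gap x : \sum_i p i / L i * model i x <= mu * (fstar - f x).
Proof.
have := strong xs x; rewrite -fxs.
rewrite inprod_blk_sum /norm_LPinv sqr_sqrtr; last first.
  by apply: sumr_ge0 => i _; rewrite mulr_ge0 ?sqr_ge0 // divr_ge0 ?ltW.
set S1 := \sum_i _; set S2 := \sum_i _ => strong_xs.
suff : \sum_i p i / L i * model i x <= mu * (S1 + mu / 2 * S2).
  by move/le_trans; apply; rewrite ler_pM2l //; lra.
rewrite /S1 /S2 mulr_sumr -big_split /= mulr_sumr; apply: ler_sum => i _.
(* Block [i] of the lower bound is minimised by the model with [c = mu L_i / p_i]. *)
have c_gt0 : 0 < mu * L i / p i by rewrite divr_gt0 ?mulr_gt0.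
have := model_val_sharp_le (blk U i (xs - x)) (nrmP i)
  (sharpP i (grad_blk U f i x)) c_gt0.
have -> : p i / L i * model i x = mu * (model i x / (mu * L i / p i)).
  by field; rewrite !gt_eqF.
move/(ler_wpM2l (ltW mu_gt0))/le_trans; apply.
rewrite le_eqVlt; apply/orP; left; apply/eqP; rewrite /grad_blk.
by field; rewrite gt_eqF.
Qed.

Lemma rcds_step_contraction x :
  \sum_i p i * (f (rcds_step U f sharp L x i) - fstar) <= (1 - mu) * (f x - fstar).
Proof.
apply: le_trans (_ : \sum_i (p i * (f x - fstar) + p i / L i * model i x) <= _).
  apply: ler_sum => i _; rewrite -mulrA -mulrDr ler_wpM2l ?(ltW (p_gt0 i)) //.
  by have := rcds_step_le x i; lra.
by rewrite big_split /= -mulr_suml p_sum1 mul1r; have := sum_model_le_gap x; lra.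
Qed.
End RCDSStep.

Section TupleSums.
Variable I : finType.

Lemma sum_tuple0 (V : nmodType) (F : seq I -> V) :
  \sum_(s : 0.-tuple I) F s = F [::].
Proof.
rewrite (eq_bigr (fun _ => F [::])); last by move=> s _; rewrite tuple0.
by rewrite sumr_const card_tuple expn0.
Qed.

Lemma sum_tuple_cons (V : nmodType) k (F : seq I -> V) :
  \sum_(s : k.+1.-tuple I) F s = \sum_i \sum_(s : k.-tuple I) F (i :: s).
Proof.
rewrite pair_big /=.
rewrite (reindex (fun ps : I * k.-tuple I => [tuple of ps.1 :: ps.2])) //=.
apply: onW_bij; exists (fun t : k.+1.-tuple I => (thead t, [tuple of behead t])).
  by move=> [i s] /=; rewrite theadE; congr pair; apply: val_inj.
by move=> t /=; rewrite -tuple_eta.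
Qed.

Lemma sum_prod_tuple (R : comPzSemiRingType) (p : I -> R) k :
  \sum_(s : k.-tuple I) \prod_(i <- s) p i = (\sum_i p i) ^+ k.
Proof.
pose F (s : seq I) := \prod_(i <- s) p i.
elim: k => [|k IH]; first by rewrite (sum_tuple0 F) /F big_nil.
rewrite (sum_tuple_cons k F) exprSr mulr_sumr; apply: eq_bigr => i _.
by rewrite /F; under eq_bigr do rewrite big_cons; rewrite -mulr_sumr IH mulrC.
Qed.

Lemma sum_prod_tuple_foldl_le (R : numDomainType) (p : I -> R) (X : Type)
    (step : X -> I -> X) (phi : X -> R) q k x :
  (forall i, 0 <= p i) -> 0 <= q ->
  (forall y, \sum_i p i * phi (step y i) <= q * phi y) ->
  \sum_(s : k.-tuple I) (\prod_(i <- s) p i) * phi (foldl step x s) <= q ^+ k * phi x.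
Proof.
move=> p_ge0 q_ge0 contract; elim: k x => [|k IH] x.
  pose F s := (\prod_(i <- s) p i) * phi (foldl step x s).
  by rewrite (sum_tuple0 F) /F big_nil !mul1r.
pose F s := (\prod_(i <- s) p i) * phi (foldl step x s).
rewrite (sum_tuple_cons k F) /F.
apply: le_trans (_ : \sum_i p i * (q ^+ k * phi (step x i)) <= _).
  apply: ler_sum => i _; under eq_bigr do rewrite big_cons -mulrA.
  by rewrite -mulr_sumr; apply: ler_wpM2l; [exact: p_ge0 | exact: IH].
under eq_bigr do rewrite mulrCA.
by rewrite -mulr_sumr exprSr -mulrA ler_wpM2l ?exprn_ge0.
Qed.
End TupleSums.

Lemma sum_markov_ge (R : realFieldType) (T : finType) (w phi : T -> R) eps :
  0 < eps -> (forall s, 0 <= w s) -> (forall s, 0 <= phi s) ->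
  \sum_s w s - (\sum_s w s * phi s) / eps <= \sum_(s | phi s <= eps) w s.
Proof.
move=> eps_gt0 w_ge0 phi_ge0.
rewrite (bigID (fun s => phi s <= eps)) /= lerBlDr lerD2l.
rewrite ler_pdivlMr // mulr_suml [leRHS](bigID (fun s => phi s <= eps)) /=.
rewrite -[leLHS]add0r; apply: lerD; first by apply: sumr_ge0 => s _; rewrite mulr_ge0.
by apply: ler_sum => s; rewrite -ltNge => /ltW eps_le; rewrite ler_wpM2l.
Qed.

Lemma expr_le_of_ln_le (R : realType) (mu a : R) k :
  0 < mu -> mu <= 1 -> 0 < a -> mu^-1 * ln a <= k%:R -> (1 - mu) ^+ k <= a^-1.
Proof.
move=> mu_gt0 mu_le1 a_gt0 k_ge.
apply: (@le_trans _ _ (expR (k%:R * - mu))).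
  rewrite expRM_natl lerXn2r ?inE ?nnegrE ?expR_ge0 ?subr_ge0 //.
  by have := expR_ge1Dx (- mu).
rewrite -[a in a^-1]lnK // -expRN ler_expR.
by rewrite -(ler_pM2l mu_gt0) mulrA mulfV ?gt_eqF // mul1r in k_ge; lra.
Qed.

Theorem theorem12 (R : realType) (n : nat) (Ns : 'I_n -> nat)
  (U : 'M[R]_(\sum_(i < n) Ns i))
  (nrm : forall i : 'I_n, 'cV[R]_(Ns i) -> R)
  (f : 'cV[R]_(\sum_(i < n) Ns i) -> R) (L p : 'I_n -> R)
  (sharp : forall i : 'I_n, 'cV[R]_(Ns i) -> 'cV[R]_(Ns i))
  (fstar mu : R) (x0 : 'cV[R]_(\sum_(i < n) Ns i)) (eps rho : R) (k : nat) :
  is_perm_mx U ->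
  (forall i, is_norm (nrm i)) ->
  convex_fun f ->
  (forall x, differentiable f x) ->
  (forall i, 0 < L i) ->
  (forall x i (t : 'cV[R]_(Ns i)),
     dual_norm (nrm i) (grad_blk U f i (x + Ublk U i *m t) - grad_blk U f i x)
       <= L i * nrm i t) ->
  (exists xs, f xs = fstar) -> (forall x, fstar <= f x) ->
  (forall i, 0 < p i) -> \sum_(i < n) p i = 1 ->
  (forall i s, is_sharp (nrm i) s (sharp i s)) ->
  0 < mu ->
  (forall x y, f x >= f y + inprod (grad f y) (x - y)
                 + mu / 2 * (norm_LPinv U nrm L p (x - y)) ^+ 2) ->
  0 < eps -> eps < f x0 - fstar ->
  0 < rho < 1 ->
  k%:R >= mu^-1 * ln ((f x0 - fstar) / (eps * rho)) ->
  rcds_prob U f sharp L p x0 k fstar eps >= 1 - rho.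
Proof.
move=> U_perm nrmP _ df L_gt0 lipL [xs fxs] fstar_le p_gt0 p_sum1 sharpP mu_gt0
  strong eps_gt0 eps_lt /andP[rho_gt0 _] k_ge.
have gap_ge0 x : 0 <= f x - fstar by rewrite subr_ge0.
have gap0_gt0 : 0 < f x0 - fstar by lra.
have p_ge0 i : 0 <= p i by exact: ltW.
have contract := rcds_step_contraction nrmP L_gt0 sharpP lipL U_perm df p_gt0 p_sum1
  mu_gt0 fxs strong.
have q_ge0 : 0 <= 1 - mu.
  have := le_trans (sumr_ge0 _ (fun i _ => mulr_ge0 (p_ge0 i) (gap_ge0 _))) (contract x0).
  by rewrite pmulr_lge0.
have expected_le := sum_prod_tuple_foldl_le (phi := fun x => f x - fstar) k x0 p_ge0
  q_ge0 contract.
have contraction_le : (1 - mu) ^+ k <= eps * rho / (f x0 - fstar).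
  rewrite -invf_div; apply: expr_le_of_ln_le; rewrite ?divr_gt0 ?mulr_gt0 //.
  by rewrite -subr_ge0.
have := sum_markov_ge (w := fun s : k.-tuple 'I_n => \prod_(i <- s) p i)
  (phi := fun s => f (rcds_iter U f sharp L x0 s) - fstar)
  eps_gt0 (fun s => prodr_ge0 _ (fun i _ => p_ge0 i)) (fun s => gap_ge0 _).
rewrite sum_prod_tuple p_sum1 expr1n; apply: le_trans; rewrite lerD2l lerN2.
rewrite ler_pdivrMr //; apply: le_trans expected_le _.
by rewrite -ler_pdivlMr // [rho * eps]mulrC.
Qed.
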